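(* Let $\mathbf f=(f_1,\dots,f_n)$ be a strongly generic $n$-tuple with $R[\mathbf f]=R$. Assume $\mathbf g=(g_1,\dots,g_n)\in\mathcal G_{00}^n$ is such that for all $(i,j)\in R$, $g_i\to f_j$ and $f_i\to g_j$ in $\Gamma_{\mathcal G}$. For $(x_1,\dots,x_n)\in(0,1]^n$ let $h_i=x_if_i+(1-x_i)g_i$. Then $\mathbf h=(h_1,\dots,h_n)$ is strongly generic and $R[\mathbf h]=R$.
   Context: $\mathcal G$ is the group of strictly increasing continuous maps $f:[-1,1]\to[-1,1]$ with $f(\pm1)=\pm1$; $\mathcal G_0=\{f\in\mathcal G:\int_{-1}^1f=0\}$; $\mathcal G_{00}$ the odd elements of $\mathcal G$. $f^e(t)=\tfrac12(f(t)+f(-t))$; $Q(f,g)=\int_{-1}^1f(g^{-1}(t))\,dt$. The digraph $\Gamma_{\mathcal G}$: $f\to g$ iff $Q(g,f)>0$. $R[\mathbf f]$ is the digraph on $[n]$ with $(i,j)\in R[\mathbf f]$ iff $Q(f_j,f_i)>0$. $\mathbf f\in\mathcal G_0^n$ is strongly generic if $\{f_1^e,\dots,f_n^e\}$ is linearly independent and $Q(f_i,f_j)\ne0$ for all $i\ne j$. *)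

From Stdlib Require Import Reals Lra ClassicalEpsilon.
From Coquelicot Require Import Coquelicot.
Open Scope R_scope.

Definition I11 (t : R) : Prop := -1 <= t <= 1.

Definition cont_on_I (f : R -> R) : Prop :=
  forall t, I11 t -> forall eps, 0 < eps -> exists delta, 0 < delta /\
    forall s, I11 s -> Rabs (s - t) < delta -> Rabs (f s - f t) < eps.

(* The group G: strictly increasing continuous maps [-1,1] -> [-1,1] fixing +-1
   (only the restriction to [-1,1] matters). *)
Definition inG (f : R -> R) : Prop :=
  (forall t, I11 t -> I11 (f t)) /\
  (forall s t, I11 s -> I11 t -> s < t -> f s < f t) /\
  cont_on_I f /\ f (-1) = -1 /\ f 1 = 1.

Definition inG0 (f : R -> R) : Prop := inG f /\ RInt f (-1) 1 = 0.

Definition inG00 (f : R -> R) : Prop :=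
  inG f /\ forall t, I11 t -> f (- t) = - f t.

(* inverse of g on [-1,1]: the (unique, for g in G) s in [-1,1] with g s = t *)
Definition ginv (g : R -> R) (t : R) : R :=
  epsilon (inhabits 0) (fun s => I11 s /\ g s = t).

Definition Q (f g : R -> R) : R := RInt (fun t => f (ginv g t)) (-1) 1.

(* edge f -> g in Gamma_G iff Q(g,f) > 0 *)
Definition arrow (f g : R -> R) : Prop := Q g f > 0.

Definition even_part (f : R -> R) (t : R) : R := (f t + f (- t)) / 2.

(* an n-tuple is a function nat -> (R -> R), indices 0..n-1 *)
Definition lin_indep_even (n : nat) (f : nat -> R -> R) : Prop :=
  forall c : nat -> R,
    (forall t, I11 t -> sum_f_R0 (fun i => c i * even_part (f i) t) (pred n) = 0) ->
    forall i, (i < n)%nat -> c i = 0.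

Definition strongly_generic (n : nat) (f : nat -> R -> R) : Prop :=
  (forall i, (i < n)%nat -> inG0 (f i)) /\
  lin_indep_even n f /\
  (forall i j, (i < n)%nat -> (j < n)%nat -> i <> j -> Q (f i) (f j) <> 0).

(* R[f] = Rel as digraphs on [n] = {0,...,n-1}: (i,j) in R[f] iff Q(f_j,f_i) > 0 *)
Definition digraph_of_eq (n : nat) (f : nat -> R -> R) (Rel : nat -> nat -> Prop) : Prop :=
  forall i j, (i < n)%nat -> (j < n)%nat -> (Q (f j) (f i) > 0 <-> Rel i j).

From Stdlib Require Import Reals Lra Lia ClassicalEpsilon.
From Coquelicot Require Import Coquelicot.
Open Scope R_scope.

(* The key fact is the antisymmetry Q(f,g) = -Q(g,f) on G: the integrals of
   f o g^-1 and of g o f^-1 are the areas on the two sides of the curve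
   t |-> (g t, f t), so their sum is [f g] evaluated between -1 and 1, i.e. 0.
   Hence Q(h_j,h_i) expands bilinearly into
   x_j x_i Q(f_j,f_i) + x_j (1-x_i) Q(f_j,g_i) + (1-x_j) x_i Q(g_j,f_i),
   the term Q(g_j,g_i) vanishing because odd maps have odd inverses.  On the
   edges of R every term is nonnegative and the first one positive.  As f is
   strongly generic, R is a tournament, and an antisymmetric matrix positive
   on the edges of a tournament has exactly that tournament as its sign
   pattern.  Finally the even part of h_i is x_i times that of f_i. *)

Definition clamp (t : R) : R := Rmax (-1) (Rmin 1 t).

Lemma clamp_I11 t : I11 (clamp t).
Proof. unfold clamp, I11, Rmax, Rmin; repeat destruct Rle_dec; lra. Qed.

Lemma clamp_id t : I11 t -> clamp t = t.
Proof. unfold clamp, I11, Rmax, Rmin; intros; repeat destruct Rle_dec; lra. Qed.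

Lemma clamp_dist s t : Rabs (clamp s - clamp t) <= Rabs (s - t).
Proof. unfold clamp, Rmax, Rmin; repeat destruct Rle_dec; split_Rabs; lra. Qed.

Lemma continuity_pt_clamp F : cont_on_I F -> forall t, continuity_pt (fun s => F (clamp s)) t.
Proof.
  intros HF t eps Heps.
  destruct (HF (clamp t) (clamp_I11 t) eps Heps) as [d [Hd Hclose]].
  exists d; split; [exact Hd|]. intros s [_ Hs]; simpl in *; unfold R_dist in *.
  apply Hclose; [apply clamp_I11|]. eapply Rle_lt_trans; [apply clamp_dist|exact Hs].
Qed.

Lemma ex_RInt_cont_on_I F a b : cont_on_I F -> I11 a -> I11 b -> ex_RInt F a b.
Proof.
  intros HF Ha Hb.
  apply ex_RInt_ext with (fun t => F (clamp t)).
  { intros t Ht. rewrite clamp_id; [reflexivity|].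
    unfold I11, Rmin, Rmax in *; destruct Rle_dec; lra. }
  apply (@ex_RInt_continuous R_CompleteNormedModule). intros t _.
  apply continuity_pt_filterlim, continuity_pt_clamp, HF.
Qed.

Lemma cont_on_I_comp f u : cont_on_I f -> cont_on_I u -> (forall t, I11 t -> I11 (u t)) ->
  cont_on_I (fun t => f (u t)).
Proof.
  intros Hf Hu HuI t Ht eps Heps.
  destruct (Hf (u t) (HuI t Ht) eps Heps) as [d1 [Hd1 H1]].
  destruct (Hu t Ht d1 Hd1) as [d2 [Hd2 H2]].
  exists d2; split; auto.
Qed.

Section GroupElement.

Variable g : R -> R.
Hypothesis Hg : inG g.

Lemma inG_I11 t : I11 t -> I11 (g t).
Proof. apply Hg. Qed.

Lemma inG_m1 : g (-1) = -1.
Proof. apply Hg. Qed.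

Lemma inG_1 : g 1 = 1.
Proof. apply Hg. Qed.

Lemma inG_lt s t : I11 s -> I11 t -> s < t -> g s < g t.
Proof. apply Hg. Qed.

Lemma inG_le s t : I11 s -> I11 t -> s <= t -> g s <= g t.
Proof.
  intros Hs Ht [Hst|<-]; [left; apply inG_lt; auto|right; reflexivity].
Qed.

Lemma inG_inj s t : I11 s -> I11 t -> g s = g t -> s = t.
Proof.
  intros Hs Ht E. destruct (Rtotal_order s t) as [L|[L|L]]; [|exact L|].
  - pose proof (inG_lt s t Hs Ht L); lra.
  - pose proof (inG_lt t s Ht Hs L); lra.
Qed.

Lemma inG_surj t : I11 t -> exists s, I11 s /\ g s = t.
Proof.
  intros Ht. destruct Hg as [_ [_ [Hc [Hm1 H1]]]].
  assert (Hc' : cont_on_I (fun s => g s - t)).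
  { apply (cont_on_I_comp (fun y => y - t)); [|exact Hc|exact (inG_I11)].
    intros y _ eps Heps. exists eps; split; [exact Heps|].
    intros z _ Hz. replace (z - t - (y - t)) with (z - y) by ring. exact Hz. }
  destruct (IVT_cor (fun s => g (clamp s) - t) (-1) 1) as [s [Hs Hs0]].
  - exact (continuity_pt_clamp _ Hc').
  - lra.
  - rewrite !clamp_id by (red; lra). rewrite Hm1, H1. red in Ht; nra.
  - exists s. rewrite clamp_id in Hs0 by (red; lra). split; [red; lra|lra].
Qed.

Lemma ginv_spec t : I11 t -> I11 (ginv g t) /\ g (ginv g t) = t.
Proof. intros Ht. unfold ginv. apply epsilon_spec, inG_surj, Ht. Qed.

Lemma ginv_I11 t : I11 t -> I11 (ginv g t).
Proof. apply ginv_spec. Qed.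

Lemma ginvK s : I11 s -> ginv g (g s) = s.
Proof.
  intros Hs. destruct (ginv_spec (g s) (inG_I11 s Hs)) as [H1 H2].
  apply inG_inj; assumption.
Qed.

Lemma ginv_lt_of_lt s t : I11 s -> I11 t -> t < g s -> ginv g t < s.
Proof.
  intros Hs Ht Hlt. destruct (ginv_spec t Ht) as [H1 H2].
  destruct (Rlt_or_le (ginv g t) s) as [L|L]; [exact L|].
  pose proof (inG_le s (ginv g t) Hs H1 L); lra.
Qed.

Lemma ginv_gt_of_gt s t : I11 s -> I11 t -> g s < t -> s < ginv g t.
Proof.
  intros Hs Ht Hlt. destruct (ginv_spec t Ht) as [H1 H2].
  destruct (Rlt_or_le s (ginv g t)) as [L|L]; [exact L|].
  pose proof (inG_le (ginv g t) s H1 Hs L); lra.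
Qed.

Lemma ginv_le s t : I11 s -> I11 t -> s <= t -> ginv g s <= ginv g t.
Proof.
  intros Hs Ht Hst. destruct (ginv_spec s Hs) as [S1 S2]. destruct (ginv_spec t Ht) as [T1 T2].
  destruct (Rle_or_lt (ginv g s) (ginv g t)) as [L|L]; [exact L|].
  pose proof (inG_lt _ _ T1 S1 L); lra.
Qed.

Lemma ginv_bounds a b t : I11 a -> I11 b -> I11 t -> g a <= t <= g b ->
  a <= ginv g t <= b.
Proof.
  intros Ha Hb Ht [Hat Htb]. rewrite <- (ginvK a Ha), <- (ginvK b Hb).
  split; apply ginv_le; auto using inG_I11.
Qed.

Lemma ginv_upper t eps : I11 t -> 0 < eps -> exists d, 0 < d /\
  forall t', I11 t' -> t' < t + d -> ginv g t' < ginv g t + eps.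
Proof.
  intros Ht Heps. destruct (ginv_spec t Ht) as [S1 S2].
  destruct (Rle_dec (ginv g t + eps / 2) 1) as [L|L].
  - assert (Hs : I11 (ginv g t + eps / 2)) by (red in S1 |- *; lra).
    exists (g (ginv g t + eps / 2) - t). split.
    + enough (g (ginv g t) < g (ginv g t + eps / 2)) by lra. apply inG_lt; auto; lra.
    + intros t' Ht' Hlt. apply Rlt_trans with (ginv g t + eps / 2); [|lra].
      apply ginv_lt_of_lt; auto; lra.
  - exists 1. split; [lra|]. intros t' Ht' _. pose proof (ginv_I11 t' Ht') as It'. red in It'; lra.
Qed.

Lemma ginv_lower t eps : I11 t -> 0 < eps -> exists d, 0 < d /\
  forall t', I11 t' -> t - d < t' -> ginv g t - eps < ginv g t'.
Proof.
  intros Ht Heps. destruct (ginv_spec t Ht) as [S1 S2].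
  destruct (Rle_dec (-1) (ginv g t - eps / 2)) as [L|L].
  - assert (Hs : I11 (ginv g t - eps / 2)) by (red in S1 |- *; lra).
    exists (t - g (ginv g t - eps / 2)). split.
    + enough (g (ginv g t - eps / 2) < g (ginv g t)) by lra. apply inG_lt; auto; lra.
    + intros t' Ht' Hlt. apply Rlt_trans with (ginv g t - eps / 2); [lra|].
      apply ginv_gt_of_gt; auto; lra.
  - exists 1. split; [lra|]. intros t' Ht' _. pose proof (ginv_I11 t' Ht') as It'. red in It'; lra.
Qed.

Lemma ginv_cont : cont_on_I (ginv g).
Proof.
  intros t Ht eps Heps.
  destruct (ginv_upper t eps Ht Heps) as [d1 [Hd1 H1]].
  destruct (ginv_lower t eps Ht Heps) as [d2 [Hd2 H2]].
  exists (Rmin d1 d2). split; [apply Rmin_pos; assumption|].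
  intros t' Ht' Hdist. pose proof (Rmin_l d1 d2). pose proof (Rmin_r d1 d2).
  apply Rabs_def2 in Hdist.
  specialize (H1 t' Ht' ltac:(lra)). specialize (H2 t' Ht' ltac:(lra)).
  apply Rabs_def1; lra.
Qed.

End GroupElement.

Lemma cont_on_I_Q_integrand f g : cont_on_I f -> inG g -> cont_on_I (fun t => f (ginv g t)).
Proof. intros Hf Hg. apply cont_on_I_comp; [exact Hf|exact (ginv_cont g Hg)|exact (ginv_I11 g Hg)]. Qed.

Lemma ex_RInt_Q_integrand f g a b : cont_on_I f -> inG g -> I11 a -> I11 b ->
  ex_RInt (fun t => f (ginv g t)) a b.
Proof. intros Hf Hg. apply ex_RInt_cont_on_I, cont_on_I_Q_integrand; assumption. Qed.

Lemma RInt_bounds F lo hi a b : a <= b -> ex_RInt F a b ->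
  (forall t, a <= t <= b -> lo <= F t <= hi) ->
  lo * (b - a) <= RInt F a b <= hi * (b - a).
Proof.
  intros Hab HF Hbnd.
  assert (Hconst : forall c, RInt (fun _ => c) a b = c * (b - a)).
  { intros c. rewrite RInt_const. unfold scal; simpl; unfold mult; simpl. ring. }
  rewrite <- !Hconst. split; apply RInt_le; auto using ex_RInt_const;
    intros t Ht; apply Hbnd; lra.
Qed.

Lemma partition_point_I11 N k : (0 < N)%nat -> (k <= N)%nat -> I11 (-1 + 2 * INR k / INR N).
Proof.
  intros HN Hk. apply lt_0_INR in HN. apply le_INR in Hk. pose proof (pos_INR k).
  assert (Hq : INR k = INR k / INR N * INR N) by (field; lra).
  assert (0 <= INR k / INR N <= 1) by (split; nra).
  red. unfold Rdiv in *. lra.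
Qed.

Section Young.

Variables f g : R -> R.
Hypotheses (Hf : inG f) (Hg : inG g).

Definition young_defect (a b : R) : R :=
  RInt (fun t => f (ginv g t)) (g a) (g b) + RInt (fun t => g (ginv f t)) (f a) (f b)
  - (f b * g b - f a * g a).

Lemma young_defect_Chasles a b c : I11 a -> I11 b -> I11 c ->
  young_defect a c = young_defect a b + young_defect b c.
Proof.
  intros Ha Hb Hc. unfold young_defect.
  assert (Hexf : forall u v, I11 u -> I11 v -> ex_RInt (fun t => f (ginv g t)) (g u) (g v))
    by (intros; apply ex_RInt_Q_integrand; auto using inG_I11; apply Hf).
  assert (Hexg : forall u v, I11 u -> I11 v -> ex_RInt (fun t => g (ginv f t)) (f u) (f v))
    by (intros; apply ex_RInt_Q_integrand; auto using inG_I11; apply Hg).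
  rewrite <- (RInt_Chasles _ (g a) (g b) (g c)), <- (RInt_Chasles _ (f a) (f b) (f c)) by auto.
  change plus with Rplus. ring.
Qed.

Lemma young_defect_bound a b : I11 a -> I11 b -> a <= b ->
  Rabs (young_defect a b) <= (f b - f a) * (g b - g a).
Proof.
  intros Ha Hb Hab. unfold young_defect.
  destruct (RInt_bounds (fun t => f (ginv g t)) (f a) (f b) (g a) (g b)) as [L1 U1].
  { apply inG_le; auto. }
  { apply ex_RInt_Q_integrand; auto using inG_I11; apply Hf. }
  { intros t Ht. assert (It : I11 t)
      by (pose proof (inG_I11 g Hg a Ha) as Iga; pose proof (inG_I11 g Hg b Hb) as Igb;
          red in Iga, Igb |- *; lra).
    pose proof (ginv_bounds g Hg a b t Ha Hb It Ht).
    split; apply inG_le; auto using ginv_I11; lra. }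
  destruct (RInt_bounds (fun t => g (ginv f t)) (g a) (g b) (f a) (f b)) as [L2 U2].
  { apply inG_le; auto. }
  { apply ex_RInt_Q_integrand; auto using inG_I11; apply Hg. }
  { intros t Ht. assert (It : I11 t)
      by (pose proof (inG_I11 f Hf a Ha) as Ifa; pose proof (inG_I11 f Hf b Hb) as Ifb;
          red in Ifa, Ifb |- *; lra).
    pose proof (ginv_bounds f Hf a b t Ha Hb It Ht).
    split; apply inG_le; auto using ginv_I11; lra. }
  apply Rabs_le. lra.
Qed.

Lemma young_defect_step a b d : I11 a -> I11 b -> a <= b -> g b - g a <= d ->
  Rabs (young_defect (-1) a) <= d * (f a + 1) ->
  Rabs (young_defect (-1) b) <= d * (f b + 1).
Proof.
  intros Ha Hb Hab Hd IH.
  rewrite (young_defect_Chasles (-1) a b) by (auto; red; lra).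
  pose proof (young_defect_bound a b Ha Hb Hab).
  pose proof (inG_le f Hf a b Ha Hb Hab). pose proof (inG_le g Hg a b Ha Hb Hab).
  eapply Rle_trans; [apply Rabs_triang|]. nra.
Qed.

(* Cut [-1,1] at the preimages under [g] of [N] equal steps: each piece
   contributes at most [2 / N] times its increment of [f]. *)
Lemma young_defect_small N : (0 < N)%nat -> Rabs (young_defect (-1) 1) <= 4 / INR N.
Proof.
  intros HN. assert (HNpos : 0 < INR N) by (apply lt_0_INR; exact HN).
  set (s k := ginv g (-1 + 2 * INR k / INR N)).
  assert (Hs : forall k, (k <= N)%nat -> I11 (s k) /\ g (s k) = -1 + 2 * INR k / INR N)
    by (intros; apply ginv_spec, partition_point_I11; auto).
  assert (Hall : forall k, (k <= N)%nat ->
    Rabs (young_defect (-1) (s k)) <= 2 / INR N * (f (s k) + 1)).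
  { induction k as [|k IHk]; intros Hk.
    - assert (Hs0 : s O = -1).
      { unfold s. replace (-1 + 2 * INR 0 / INR N) with (g (-1))
          by (simpl; rewrite inG_m1 by exact Hg; field; lra).
        apply ginvK; [exact Hg|red; lra]. }
      assert (Hempty : young_defect (-1) (-1) = 0)
        by (unfold young_defect; rewrite !RInt_point; change zero with 0; ring).
      rewrite Hs0, Hempty, Rabs_R0, (inG_m1 f Hf). lra.
    - destruct (Hs k ltac:(lia)) as [Ik Ek]. destruct (Hs (S k) Hk) as [ISk ESk].
      apply young_defect_step with (a := s k); auto with arith.
      + apply ginv_le; [exact Hg|apply partition_point_I11; auto; lia ..|].
        rewrite S_INR. pose proof (Rinv_0_lt_compat _ HNpos). unfold Rdiv. nra.
      + rewrite ESk, Ek, S_INR. right. field. lra. }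
  assert (HsN : s N = 1).
  { unfold s. replace (-1 + 2 * INR N / INR N) with (g 1)
      by (rewrite inG_1 by exact Hg; field; lra).
    apply ginvK; [exact Hg|red; lra]. }
  specialize (Hall N (le_n N)). rewrite HsN, (inG_1 f Hf) in Hall.
  replace (4 / INR N) with (2 / INR N * (1 + 1)) by (field; lra). exact Hall.
Qed.

Lemma young_defect_full : young_defect (-1) 1 = 0.
Proof.
  destruct (Req_dec (young_defect (-1) 1) 0) as [E|E]; [exact E|exfalso].
  assert (Hpos : 0 < Rabs (young_defect (-1) 1) / 4) by (pose proof (Rabs_pos_lt _ E); lra).
  destruct (archimed_cor1 _ Hpos) as [N [HN1 HN2]].
  pose proof (young_defect_small N HN2).
  unfold Rdiv in *. lra.
Qed.

End Young.

Lemma Q_antisym f g : inG f -> inG g -> Q f g = - Q g f.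
Proof.
  intros Hf Hg. pose proof (young_defect_full f g Hf Hg) as Hyoung. unfold young_defect in Hyoung.
  rewrite (inG_m1 f Hf), (inG_1 f Hf), (inG_m1 g Hg), (inG_1 g Hg) in Hyoung. unfold Q. lra.
Qed.

Lemma RInt_lincomb (u v : R -> R) a b x y : ex_RInt u x y -> ex_RInt v x y ->
  RInt (fun t => a * u t + b * v t) x y = a * RInt u x y + b * RInt v x y.
Proof.
  intros Hu Hv. apply is_RInt_unique.
  exact (@is_RInt_plus R_NormedModule (fun t => scal a (u t)) (fun t => scal b (v t)) x y
     (scal a (RInt u x y)) (scal b (RInt v x y))
     (is_RInt_scal _ _ _ _ _ (RInt_correct _ _ _ Hu))
     (is_RInt_scal _ _ _ _ _ (RInt_correct _ _ _ Hv))).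
Qed.

Lemma Q_lincomb_l f1 f2 g a b : cont_on_I f1 -> cont_on_I f2 -> inG g ->
  Q (fun t => a * f1 t + b * f2 t) g = a * Q f1 g + b * Q f2 g.
Proof.
  intros H1 H2 Hg. apply RInt_lincomb; apply ex_RInt_Q_integrand; auto; red; lra.
Qed.

Lemma RInt_odd F : cont_on_I F -> (forall t, I11 t -> F (- t) = - F t) -> RInt F (-1) 1 = 0.
Proof.
  intros HF Hodd.
  assert (Hex : ex_RInt F (-1 * -1 + 0) (-1 * 1 + 0)) by (apply ex_RInt_cont_on_I; auto; red; lra).
  pose proof (RInt_comp_lin F (-1) 0 (-1) 1 Hex) as Hsub.
  replace (-1 * -1 + 0) with 1 in Hsub by ring. replace (-1 * 1 + 0) with (-1) in Hsub by ring.
  rewrite (RInt_ext _ F) in Hsub.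
  2:{ intros t Ht. unfold Rmin, Rmax in Ht; destruct Rle_dec; [|lra].
      replace (-1 * t + 0) with (- t) by ring. rewrite Hodd by (red; lra).
      unfold scal; simpl; unfold mult; simpl; ring. }
  rewrite <- (opp_RInt_swap F (-1) 1) in Hsub by (apply ex_RInt_cont_on_I; auto; red; lra).
  change (opp ?a) with (- a) in Hsub. lra.
Qed.

Lemma ginv_odd g t : inG00 g -> I11 t -> ginv g (- t) = - ginv g t.
Proof.
  intros [Hg Hodd] Ht. destruct (ginv_spec g Hg t Ht) as [I1 E1].
  rewrite <- E1 at 1. rewrite <- Hodd by exact I1. apply ginvK; [exact Hg|red in I1 |- *; lra].
Qed.

Lemma Q_odd f g : cont_on_I f -> (forall t, I11 t -> f (- t) = - f t) -> inG00 g -> Q f g = 0.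
Proof.
  intros Hf Hfodd Hg. apply RInt_odd; [apply cont_on_I_Q_integrand; [exact Hf|apply Hg]|].
  intros t Ht. rewrite ginv_odd by assumption. apply Hfodd, ginv_I11; [apply Hg|exact Ht].
Qed.

Definition mix (x : R) (f g : R -> R) (t : R) : R := x * f t + (1 - x) * g t.

Lemma cont_on_I_mix x f g : 0 <= x <= 1 -> cont_on_I f -> cont_on_I g -> cont_on_I (mix x f g).
Proof.
  intros Hx Hf Hg t Ht eps Heps.
  destruct (Hf t Ht eps Heps) as [d1 [Hd1 H1]]. destruct (Hg t Ht eps Heps) as [d2 [Hd2 H2]].
  exists (Rmin d1 d2). split; [apply Rmin_pos; assumption|].
  intros s Hs Hst. pose proof (Rmin_l d1 d2). pose proof (Rmin_r d1 d2).
  specialize (H1 s Hs ltac:(lra)). specialize (H2 s Hs ltac:(lra)).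
  unfold mix. replace (x * f s + (1 - x) * g s - (x * f t + (1 - x) * g t))
    with (x * (f s - f t) + (1 - x) * (g s - g t)) by ring.
  eapply Rle_lt_trans; [apply Rabs_triang|].
  rewrite !Rabs_mult, (Rabs_right x), (Rabs_right (1 - x)) by lra.
  destruct (Rle_lt_or_eq_dec 0 x (proj1 Hx)) as [Hxpos|<-]; [|lra].
  assert (0 < x * (eps - Rabs (f s - f t))) by (apply Rmult_lt_0_compat; lra).
  assert (0 <= (1 - x) * (eps - Rabs (g s - g t))) by (apply Rmult_le_pos; lra).
  lra.
Qed.

Lemma inG_mix x f g : 0 <= x <= 1 -> inG f -> inG g -> inG (mix x f g).
Proof.
  intros Hx Hf Hg. unfold mix. split; [|split; [|split; [|split]]].
  - intros t Ht. pose proof (inG_I11 f Hf t Ht) as Ift. pose proof (inG_I11 g Hg t Ht) as Igt.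
    red in Ift, Igt |- *. split; nra.
  - intros s t Hs Ht Hst. pose proof (inG_lt f Hf s t Hs Ht Hst).
    pose proof (inG_lt g Hg s t Hs Ht Hst).
    destruct (Rle_lt_or_eq_dec x 1 (proj2 Hx)) as [Hx1|Hx1]; [|subst x; lra].
    assert (0 <= x * (f t - f s)) by (apply Rmult_le_pos; lra).
    assert (0 < (1 - x) * (g t - g s)) by (apply Rmult_lt_0_compat; lra).
    lra.
  - apply cont_on_I_mix; [exact Hx|apply Hf|apply Hg].
  - rewrite (inG_m1 f Hf), (inG_m1 g Hg). ring.
  - rewrite (inG_1 f Hf), (inG_1 g Hg). ring.
Qed.

Lemma inG0_mix x f g : 0 <= x <= 1 -> inG0 f -> inG00 g -> inG0 (mix x f g).
Proof.
  intros Hx [Hf Hf0] [Hg Hgodd]. split; [apply inG_mix; assumption|].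
  assert (Hg0 : RInt g (-1) 1 = 0) by (apply RInt_odd; [apply Hg|exact Hgodd]).
  assert (Hex : forall F, inG F -> ex_RInt F (-1) 1)
    by (intros F HF; apply ex_RInt_cont_on_I; [apply HF|red; lra ..]).
  unfold mix. rewrite RInt_lincomb, Hf0, Hg0 by auto.
  rewrite !Rmult_0_r, Rplus_0_r. reflexivity.
Qed.

Lemma even_part_mix x f g t : inG00 g -> I11 t -> even_part (mix x f g) t = x * even_part f t.
Proof.
  intros [_ Hgodd] Ht. unfold even_part, mix. rewrite Hgodd by exact Ht. field.
Qed.

Lemma lin_indep_even_mix n x f g : lin_indep_even n f ->
  (forall i, (i < n)%nat -> inG00 (g i)) -> (forall i, (i < n)%nat -> 0 < x i) ->
  lin_indep_even n (fun i => mix (x i) (f i) (g i)).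
Proof.
  intros Hf Hg Hx c Hc i Hi.
  assert (Hcx : c i * x i = 0).
  { apply (Hf (fun k => c k * x k)); [|exact Hi].
    intros t Ht. rewrite <- (Hc t Ht). apply sum_eq. intros k Hk.
    rewrite even_part_mix by (auto; apply Hg; lia). ring. }
  specialize (Hx i Hi). apply Rmult_integral in Hcx. destruct Hcx; [assumption|lra].
Qed.

Lemma Q_mix_mix xi fi gi xj fj gj : 0 <= xi <= 1 -> 0 <= xj <= 1 ->
  inG fi -> inG00 gi -> inG fj -> inG00 gj ->
  Q (mix xj fj gj) (mix xi fi gi) =
  xj * xi * Q fj fi + xj * (1 - xi) * Q fj gi + (1 - xj) * xi * Q gj fi.
Proof.
  intros Hxi Hxj Hfi [Hgi Hgi_odd] Hfj [Hgj Hgj_odd].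
  assert (Hhi : inG (mix xi fi gi)) by (apply inG_mix; assumption).
  unfold mix at 1. rewrite Q_lincomb_l by (apply Hfj || apply Hgj || exact Hhi).
  rewrite (Q_antisym fj), (Q_antisym gj) by assumption.
  unfold mix. rewrite !Q_lincomb_l by (apply Hfi || apply Hgi || assumption).
  rewrite (Q_odd gi gj) by (apply Hgi || exact Hgi_odd || split; assumption).
  rewrite (Q_antisym fi fj), (Q_antisym gi fj), (Q_antisym fi gj) by assumption.
  ring.
Qed.

Section Tournament.

Variables (n : nat) (q : nat -> nat -> R) (Rel : nat -> nat -> Prop).
Hypothesis q_antisym : forall i j, (i < n)%nat -> (j < n)%nat -> q i j = - q j i.

Definition tournament : Prop :=
  forall i j, (i < n)%nat -> (j < n)%nat -> i <> j -> Rel i j \/ Rel j i.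

Lemma tournament_of_signs :
  (forall i j, (i < n)%nat -> (j < n)%nat -> i <> j -> q i j <> 0) ->
  (forall i j, (i < n)%nat -> (j < n)%nat -> (q i j > 0 <-> Rel i j)) -> tournament.
Proof.
  intros Hnz Hsign i j Hi Hj Hij. specialize (Hnz i j Hi Hj Hij).
  destruct (Rtotal_order (q i j) 0) as [L|[L|L]]; [|contradiction|].
  - right. apply Hsign; [assumption ..|]. rewrite q_antisym by assumption. lra.
  - left. apply Hsign; assumption.
Qed.

Section PositiveOnEdges.

Hypothesis Htour : tournament.
Hypothesis q_pos : forall i j, (i < n)%nat -> (j < n)%nat -> Rel i j -> q i j > 0.

Lemma signs_of_tournament i j : (i < n)%nat -> (j < n)%nat -> (q i j > 0 <-> Rel i j).
Proof.
  intros Hi Hj. split; [|apply q_pos; assumption]. intros Hq.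
  destruct (Nat.eq_dec i j) as [<-|Hij].
  - pose proof (q_antisym i i Hi Hi). lra.
  - destruct (Htour i j Hi Hj Hij) as [Hr|Hr]; [exact Hr|].
    pose proof (q_pos j i Hj Hi Hr). rewrite q_antisym in Hq by assumption. lra.
Qed.

Lemma nonzero_of_tournament i j : (i < n)%nat -> (j < n)%nat -> i <> j -> q i j <> 0.
Proof.
  intros Hi Hj Hij. destruct (Htour i j Hi Hj Hij) as [Hr|Hr].
  - pose proof (q_pos i j Hi Hj Hr). lra.
  - pose proof (q_pos j i Hj Hi Hr). rewrite q_antisym by assumption. lra.
Qed.

End PositiveOnEdges.

End Tournament.

Lemma Q_mix_mix_pos xi fi gi xj fj gj : 0 < xi <= 1 -> 0 < xj <= 1 ->
  inG fi -> inG00 gi -> inG fj -> inG00 gj ->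
  Q fj fi > 0 -> Q fj gi > 0 -> Q gj fi > 0 -> Q (mix xj fj gj) (mix xi fi gi) > 0.
Proof.
  intros Hxi Hxj Hfi Hgi Hfj Hgj Hff Hfg Hgf.
  rewrite Q_mix_mix by (lra || assumption).
  assert (0 < xj * xi * Q fj fi) by (repeat apply Rmult_lt_0_compat; lra).
  assert (0 <= xj * (1 - xi) * Q fj gi) by (repeat apply Rmult_le_pos; lra).
  assert (0 <= (1 - xj) * xi * Q gj fi) by (repeat apply Rmult_le_pos; lra).
  lra.
Qed.

Theorem proposition4p17 (n : nat) (f g : nat -> R -> R) (Rel : nat -> nat -> Prop)
  (x : nat -> R) :
  strongly_generic n f ->
  digraph_of_eq n f Rel ->
  (forall i, (i < n)%nat -> inG00 (g i)) ->
  (forall i j, (i < n)%nat -> (j < n)%nat -> Rel i j ->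
     arrow (g i) (f j) /\ arrow (f i) (g j)) ->
  (forall i, (i < n)%nat -> 0 < x i <= 1) ->
  let h := fun i t => x i * f i t + (1 - x i) * g i t in
  strongly_generic n h /\ digraph_of_eq n h Rel.
Proof.
  intros [Hf0 [Hf_indep Hf_nz]] Hf_dig Hg Harrows Hx h.
  change h with (fun i => mix (x i) (f i) (g i)) in *. clear h.
  assert (Hf : forall i, (i < n)%nat -> inG (f i)) by (intros i Hi; apply Hf0, Hi).
  assert (Hh : forall i, (i < n)%nat -> inG (mix (x i) (f i) (g i)))
    by (intros i Hi; apply inG_mix; [specialize (Hx i Hi); lra|apply Hf, Hi|apply Hg, Hi]).
  assert (Htour : tournament n Rel).
  { apply (tournament_of_signs n (fun i j => Q (f j) (f i))); [|auto|exact Hf_dig].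
    intros i j Hi Hj. apply Q_antisym; auto. }
  assert (Hh_anti : forall i j, (i < n)%nat -> (j < n)%nat ->
    Q (mix (x j) (f j) (g j)) (mix (x i) (f i) (g i)) = - Q (mix (x i) (f i) (g i)) (mix (x j) (f j) (g j)))
    by (intros; apply Q_antisym; auto).
  assert (Hh_pos : forall i j, (i < n)%nat -> (j < n)%nat -> Rel i j ->
    Q (mix (x j) (f j) (g j)) (mix (x i) (f i) (g i)) > 0).
  { intros i j Hi Hj Hr. destruct (Harrows i j Hi Hj Hr) as [Hfg Hgf].
    apply Q_mix_mix_pos; auto. apply Hf_dig; assumption. }
  split; [split; [|split]|].
  - intros i Hi. apply inG0_mix; auto. specialize (Hx i Hi); lra.
  - apply lin_indep_even_mix; auto. intros i Hi; apply Hx, Hi.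
  - intros i j Hi Hj Hij.
    apply (nonzero_of_tournament n (fun i j => Q (mix (x j) (f j) (g j)) (mix (x i) (f i) (g i))) Rel);
      auto.
  - intros i j Hi Hj. apply (signs_of_tournament n _ Rel Hh_anti); assumption.
Qed.
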